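(* Let $R$ be a commutative ring with unit, $\mathcal{P}$ a poset satisfying the descending chain condition, $F\colon\mathcal{P}\to R\text{-mod}$ a functor, and $i\in\mathcal{P}$. If the natural map $\operatorname{colim}_{\mathcal{P}_{<j}}F\to F(j)$ is injective for every $j\le i$, then $F$ is pseudo-projective at $j$ for every $j\le i$.
   Context: DCC: no infinite strictly descending chains. $\mathcal{P}_{<j}=\{k:k<j\}$, $\mathcal{P}_{\le j}=\{k:k\le j\}$. $F(k<j)$ is the image of the arrow $k\to j$, $F(j<j)=1$. $\operatorname{Im}_F(k)=\sum_{l<k}\operatorname{Im}F(l<k)$; $\max J$ is the set of maximal elements of $J$. $F$ is pseudo-projective at $j$ if for every finite $J\subset\mathcal{P}_{\le j}$ and every $\oplus_{k\in J}x_k\in\bigoplus_{k\in J}F(k)$ with $\sum_{k\in J}F(k<j)(x_k)=0$, one has $x_k\in\operatorname{Im}_F(k)$ for all $k\in\max J$. *)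

From HB Require Import structures.
From mathcomp Require Import all_boot all_order all_algebra.
Set Implicit Arguments. Unset Strict Implicit. Unset Printing Implicit Defensive.
Import Order.TTheory GRing.Theory.
Local Open Scope order_scope.
Local Open Scope ring_scope.

Definition DCC (d : Order.disp_t) (P : porderType d) : Prop :=
  ~ exists f : nat -> P, forall n, (f n.+1 < f n)%O.

Record pfunctor (R : comPzRingType) (d : Order.disp_t) (P : porderType d) := PFunctor {
  obj : P -> lmodType R;
  arr : forall k j : P, (k <= j)%O -> {linear obj k -> obj j};
  arr_id : forall (j : P) (h : (j <= j)%O) (x : obj j), arr h x = x;
  arr_comp : forall (k l j : P) (h1 : (k <= l)%O) (h2 : (l <= j)%O) (h3 : (k <= j)%O)
               (x : obj k), arr h2 (arr h1 x) = arr h3 x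
}.

Section Defs.
Variables (R : comPzRingType) (d : Order.disp_t) (P : porderType d) (F : pfunctor R P).

(* F(k<j) when k <= j, and 0 otherwise (only ever used when k <= j, or as the
   "Kronecker" coordinate extraction with k = j, where it is the identity). *)
Definition tarr (k j : P) : obj F k -> obj F j :=
  match (k <= j)%O as b return ((k <= j)%O = b -> obj F k -> obj F j) with
  | true => fun h => arr F h
  | false => fun _ _ => 0
  end erefl.

Definition inImF (k : P) (x : obj F k) : Prop :=
  exists (L : seq P) (y : forall l, obj F l),
    all (fun l => (l < k)%O) L /\ x = \sum_(l <- L) tarr k (y l).

Definition maxJ (J : seq P) (k : P) : bool :=
  (k \in J) && all (fun l => ~~ (k < l)%O) J.

(* F is pseudo-projective at j.  A finite J and an element of (+)_{k in J} F(k)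
   are given by a duplicate-free list J and a family x (only x k, k in J, matter). *)
Definition pseudo_projective (j : P) : Prop :=
  forall (J : seq P) (x : forall k, obj F k),
    uniq J -> all (fun k => (k <= j)%O) J ->
    \sum_(k <- J) tarr j (x k) = 0 ->
    forall k, maxJ J k -> inImF (x k).

(* Generating relations of colim_{P_{<j}} F = ((+)_{k<j} F(k)) / Rel :
   r = ((k,l), y) with k <= l < j stands for iota_k y - iota_l (F(k<l) y). *)
Definition relT := {kl : P * P & obj F kl.1}.

Definition relcoord (m : P) (r : relT) : obj F m :=
  (if (tag r).1 == m then tarr m (tagged r) else 0)
  - (if (tag r).2 == m then tarr m (tarr (tag r).2 (tagged r)) else 0).

(* The natural map colim_{P_{<j}} F -> F(j) is injective: every element of
   (+)_{k<j} F(k) (support J, uniq, with coordinates x k) whose image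
   sum_k F(k<j)(x_k) vanishes lies in the submodule generated by the relations. *)
Definition colim_lt_inj (j : P) : Prop :=
  forall (J : seq P) (x : forall k, obj F k),
    uniq J -> all (fun k => (k < j)%O) J ->
    \sum_(k <- J) tarr j (x k) = 0 ->
    exists rels : seq relT,
      all (fun r => ((tag r).1 <= (tag r).2)%O && ((tag r).2 < j)%O) rels /\
      forall m : P, (if m \in J then x m else 0) = \sum_(r <- rels) relcoord m r.

End Defs.

(* If j lies in J, the maximal k is j itself and x_j = - sum_(l <> j) F(l<j) x_l.
   Otherwise J < j, and injectivity of colim_{P_{<j}} F -> F(j) writes (x_l) as a
   finite sum of colimit relations iota_a y - iota_b F(a<b) y with a <= b < j.
   Take a maximal target l > k of these relations: the l-th coordinate vanishes, so
   the relations ending at l have sources whose images in F(l) sum to zero, and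
   injectivity at l (l <= i) rewrites them as relations ending strictly below l.
   The finite set of targets above k decreases in the multiset order, which is
   well founded by DCC; when no target lies above k, x_k is visibly a sum of
   images F(l<k) y with l < k. *)

From HB Require Import structures.
From mathcomp Require Import all_boot all_order all_algebra.
From Stdlib Require Import Classical ClassicalEpsilon.

Set Implicit Arguments. Unset Strict Implicit. Unset Printing Implicit Defensive.
Import Order.TTheory GRing.Theory.
Local Open Scope ring_scope.
Local Open Scope order_scope.

Section Transition.
Variables (R : comPzRingType) (d : Order.disp_t) (P : porderType d) (F : pfunctor R P).

Lemma tarrE (k j : P) (kj : k <= j) (x : obj F k) : tarr j x = arr F kj x.
Proof.
rewrite /tarr; move: (erefl (k <= j)).
case: {2 3}(k <= j) => e; first by rewrite (bool_irrelevance e kj).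
by exfalso; move: kj; rewrite e.
Qed.

Lemma tarrNE (k j : P) (x : obj F k) : ~~ (k <= j) -> tarr j x = 0.
Proof.
move=> nkj; rewrite /tarr; move: (erefl (k <= j)).
by case: {2 3}(k <= j) => // e; move: nkj; rewrite e.
Qed.

Lemma tarr_id (k : P) (x : obj F k) : tarr k x = x.
Proof. by rewrite (tarrE (lexx k)) arr_id. Qed.

Lemma tarr_comp (k l j : P) (x : obj F k) :
  k <= l -> l <= j -> tarr j (tarr l x) = tarr j x.
Proof.
move=> kl lj; rewrite (tarrE kl) (tarrE lj) (tarrE (le_trans kl lj)).
exact: arr_comp.
Qed.

Lemma tarr_is_zmod_morphism (k j : P) : zmod_morphism (@tarr R d P F k j).
Proof.
move=> x y; have [kj|nkj] := boolP (k <= j); first by rewrite !(tarrE kj) raddfB.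
by rewrite !tarrNE ?subr0.
Qed.

End Transition.

HB.instance Definition _ R d P F k j :=
  GRing.isZmodMorphism.Build _ _ (@tarr R d P F k j) (@tarr_is_zmod_morphism R d P F k j).

Lemma sum_undup_partition (V : nmodType) (I : eqType) (T : eqType) (s : seq I)
    (f : I -> T) (G : I -> V) :
  \sum_(t <- undup (map f s)) \sum_(i <- s | f i == t) G i = \sum_(i <- s) G i.
Proof.
under eq_bigr do rewrite big_mkcond.
rewrite exchange_big /=; apply: eq_big_seq => i si.
rewrite (bigD1_seq (f i)) ?undup_uniq ?mem_undup ?map_f //= eqxx.
by rewrite big1 ?addr0 // => t; rewrite eq_sym => /negPf ->.
Qed.

Section LowerImage.
Variables (R : comPzRingType) (d : Order.disp_t) (P : porderType d) (F : pfunctor R P).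

Definition lower_image (k : P) (x : obj F k) : Prop :=
  exists2 s : seq {l : P & obj F l},
    all (fun p => tag p < k) s & x = \sum_(p <- s) tarr k (tagged p).

Lemma lower_image0 (k : P) : lower_image (0 : obj F k).
Proof. by exists [::]; rewrite ?big_nil. Qed.

Lemma lower_imageD (k : P) (x y : obj F k) :
  lower_image x -> lower_image y -> lower_image (x + y).
Proof.
by move=> [s1 s1k ->] [s2 s2k ->]; exists (s1 ++ s2); rewrite ?all_cat ?s1k ?big_cat.
Qed.

Lemma lower_imageN (k : P) (x : obj F k) : lower_image x -> lower_image (- x).
Proof.
move=> [s sk ->].
exists [seq @Tagged P (tag p) (fun l => obj F l) (- tagged p) | p <- s].
  by rewrite all_map.
by rewrite big_map -sumrN; apply: eq_bigr => p _; rewrite raddfN.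
Qed.

Lemma lower_image_tarr (k l : P) (y : obj F l) : l < k -> lower_image (tarr k y).
Proof. by move=> lk; exists [:: Tagged (fun l => obj F l) y]; rewrite /= ?lk ?big_seq1. Qed.

Lemma lower_image_sum (k : P) (I : eqType) (s : seq I) (f : I -> obj F k) :
  (forall i, i \in s -> lower_image (f i)) -> lower_image (\sum_(i <- s) f i).
Proof.
elim: s => [_|i s IH fs]; first by rewrite big_nil; apply: lower_image0.
rewrite big_cons; apply: lower_imageD; first by apply: fs; rewrite mem_head.
by apply: IH => i' si'; apply: fs; rewrite in_cons si' orbT.
Qed.

(* [inImF] allows one summand per index, so summands with the same source are merged. *)
Lemma inImF_lower_image (k : P) (x : obj F k) : lower_image x -> inImF x.
Proof.
move=> [s sk ->].
exists (undup (map tag s)), (fun l => \sum_(p <- s | tag p == l) tarr l (tagged p)).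
split; first by apply/allP => l; rewrite mem_undup => /mapP [p /(allP sk) pk ->].
rewrite -(sum_undup_partition _ tag); apply: eq_big_seq => l.
rewrite mem_undup => /mapP [p0 /(allP sk) p0k ->]; rewrite raddf_sum.
by apply: eq_bigr => p /eqP pl; symmetry; apply: tarr_comp; rewrite ?pl // ltW.
Qed.

Lemma inImF_top (j : P) (J : seq P) (x : forall k, obj F k) :
  uniq J -> j \in J -> all (fun k => k <= j) J -> \sum_(k <- J) tarr j (x k) = 0 ->
  inImF (x j).
Proof.
move=> J_uniq jJ J_le; rewrite (bigD1_seq j) //= tarr_id => /eqP.
rewrite addr_eq0 => /eqP ->; exists [seq l <- J | l != j], (fun l => - x l); split.
  rewrite all_filter; apply/allP => l lJ; apply/implyP => lj.
  by rewrite lt_neqAle lj (allP J_le).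
by rewrite big_filter -sumrN; apply: eq_bigr => l _; rewrite raddfN.
Qed.

End LowerImage.

Lemma seq_has_maximal (d : Order.disp_t) (P : porderType d) (S : seq P) :
  S != [::] -> exists2 l, l \in S & forall t, t \in S -> ~~ (l < t).
Proof.
elim: S => // a [|b S] IH _.
  by exists a => [|t]; rewrite ?mem_seq1 // => /eqP ->; rewrite ltxx.
have [l lS lmax] := IH isT.
have [la|nla] := boolP (l < a).
  exists a => [|t]; first exact: mem_head.
  rewrite in_cons => /predU1P [->|tS]; first by rewrite ltxx.
  by apply: contra (lmax t tS); apply: lt_trans.
exists l => [|t]; first by rewrite in_cons lS orbT.
by rewrite in_cons => /predU1P [->|/lmax].
Qed.

Section DescendingChainCondition.
Variables (d : Order.disp_t) (P : porderType d).
Hypothesis dcc : DCC P.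

(* An inaccessible point has a smaller inaccessible point; choosing one repeatedly
   yields an infinite descending chain. *)
Lemma DCC_well_founded : well_founded (fun a b : P => a < b).
Proof.
move=> x; apply: NNPP => nx.
pose B := {y : P | ~ Acc (fun a b : P => a < b) y}.
have down (y : B) : {z : B | sval z < sval y}.
  apply: constructive_indefinite_description; case: y => y ny /=.
  apply: NNPP => none; apply: ny; constructor => z zy.
  by apply: NNPP => nz; apply: none; exists (exist _ z nz).
pose chain := fix chain n : B :=
  if n is n'.+1 then sval (down (chain n')) else exist _ x nx.
by apply: dcc; exists (fun n => sval (chain n)) => n; apply: (svalP (down (chain n))).
Qed.

(* The multiset order on finite sets: [T] arises from [S] by replacing some [l]
   with elements below [l]. *)
Definition replace_lt (T S : seq P) : Prop :=
  exists2 l, l \in S & forall t, t \in T -> ((t \in S) && (t != l)) || (t < l).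

Lemma Acc_replace_lt_sub (T S : seq P) :
  {subset T <= S} -> Acc replace_lt S -> Acc replace_lt T.
Proof.
move=> TS [accS]; constructor => U [l lT Ul]; apply: accS; exists l; first exact: TS.
move=> u /Ul /orP [/andP [uT ul]|->]; last by rewrite orbT.
by rewrite TS // ul.
Qed.

Lemma Acc_replace_lt_cons (a : P) (S : seq P) :
  Acc replace_lt S -> Acc replace_lt (a :: S).
Proof.
elim: a / (DCC_well_founded a) S => a _ IHa S accS.
elim: S / accS => S accS IHS; constructor => T [l lS Tl].
case: (eqVneq l a) lS Tl => [->|nla] lS Tl.
  apply: (@Acc_replace_lt_sub _ ([seq t <- T | t < a] ++ S)).
    move=> t tT; rewrite mem_cat mem_filter tT andbT.
    case/orP: (Tl t tT) => [/andP [tS ta]|->] //.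
    by move: tS; rewrite in_cons (negPf ta) /= => ->; rewrite orbT.
  elim: (filter _ T) (filter_all (fun t => t < a) T) => [_|b D IH /andP [ba Da]].
    exact: Acc_intro accS.
  exact: IHa ba _ (IH Da).
have lS' : l \in S by move: lS; rewrite in_cons (negPf nla).
apply: (@Acc_replace_lt_sub _ (a :: [seq t <- T | t != a])).
  by move=> t tT; rewrite in_cons mem_filter tT andbT; case: eqP.
apply: IHS; exists l => // t; rewrite mem_filter => /andP [ta /Tl].
by rewrite in_cons (negPf ta).
Qed.

Lemma replace_lt_wf : well_founded replace_lt.
Proof.
elim=> [|a S IH]; last exact: Acc_replace_lt_cons.
by constructor => T [].
Qed.

End DescendingChainCondition.

Section Relations.
Variables (R : comPzRingType) (d : Order.disp_t) (P : porderType d) (F : pfunctor R P).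

Local Notation src r := (tag r).1.
Local Notation tgt r := (tag r).2.

Definition relsum (rels : seq (relT F)) (n : P) : obj F n := \sum_(r <- rels) relcoord n r.

Lemma relcoordE (n : P) (r : relT F) : src r <= tgt r ->
  relcoord n r = (if src r == n then tarr n (tagged r) else 0)
               - (if tgt r == n then tarr n (tagged r) else 0).
Proof.
by move=> st; rewrite /relcoord; case: (eqVneq (tgt r) n) => // <-; rewrite tarr_comp.
Qed.

Lemma relcoord_loop (n : P) (r : relT F) : src r = tgt r -> relcoord n r = 0.
Proof. by move=> st; rewrite relcoordE ?st // [in src r == n]st subrr. Qed.

Lemma lower_image_relcoord (m : P) (r : relT F) :
  src r <= tgt r -> ~~ (m < tgt r) -> lower_image (relcoord m r).
Proof.
move=> st nmt; rewrite relcoordE //.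
case sm: (src r == m).
  have tm : tgt r == m by move: st nmt; rewrite (eqP sm) le_eqVlt eq_sym => /orP [|->].
  by rewrite tm subrr; apply: lower_image0.
case tm: (tgt r == m); last by rewrite subrr; apply: lower_image0.
rewrite sub0r; apply/lower_imageN/lower_image_tarr.
by rewrite lt_neqAle sm -(eqP tm) st.
Qed.

Lemma relsum_push_down (l : P) (s : seq (relT F)) :
  colim_lt_inj F l -> all (fun r => (src r < l) && (tgt r == l)) s ->
  \sum_(r <- s) tarr l (tagged r) = 0 ->
  exists2 s' : seq (relT F), all (fun r => (src r <= tgt r) && (tgt r < l)) s'
    & forall n, relsum s' n = relsum s n.
Proof.
move=> inj_l s_l sum0.
pose J := undup [seq src r | r <- s].
pose x k := \sum_(r <- s | src r == k) tarr k (tagged r).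
have J_lt : all (fun k => k < l) J.
  by apply/allP => k; rewrite mem_undup => /mapP [r /(allP s_l) /andP [rl _] ->].
have xsum : \sum_(k <- J) tarr l (x k) = 0.
  rewrite -[RHS]sum0 -(sum_undup_partition _ (fun r => src r)); apply: eq_big_seq => k kJ.
  rewrite raddf_sum; apply: eq_bigr => r /eqP rk.
  by apply: tarr_comp; rewrite ?rk // ltW // (allP J_lt).
have [s' [s'_lt s'_x]] := inj_l J x (undup_uniq _) J_lt xsum.
exists s' => // n; rewrite /relsum -s'_x.
rewrite (eq_big_seq (fun r => (if src r == n then tarr n (tagged r) else 0)
                            - (if l == n then tarr n (tagged r) else 0))); last first.
  by move=> r /(allP s_l) /andP [rl /eqP tl]; rewrite -tl relcoordE // tl ltW.
rewrite sumrB; have -> : \sum_(r <- s) (if l == n then tarr n (tagged r) else 0) = 0.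
  by case: (eqVneq l n) => [<-|_]; rewrite ?sum0 ?big1.
rewrite subr0 -big_mkcond; case: ifP => // nJ.
rewrite big1_seq // => r /andP [/eqP rn rs].
suff: n \in J by rewrite nJ.
by rewrite mem_undup -rn; apply: map_f.
Qed.

Lemma relsum_reduce_top (l : P) (rels : seq (relT F)) :
  colim_lt_inj F l -> all (fun r => src r <= tgt r) rels ->
  (forall r, r \in rels -> l <= tgt r -> tgt r = l) -> relsum rels l = 0 ->
  exists2 s' : seq (relT F), all (fun r => (src r <= tgt r) && (tgt r < l)) s'
    & forall n, relsum ([seq r <- rels | tgt r != l] ++ s') n = relsum rels n.
Proof.
move=> inj_l rels_le l_top rels_l.
pose s := [seq r <- rels | (tgt r == l) && (src r != l)].
have s_l : all (fun r => (src r < l) && (tgt r == l)) s.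
  apply/allP => r; rewrite mem_filter => /andP [/andP [/eqP tl sl] rr].
  by rewrite tl eqxx andbT lt_neqAle sl -tl (allP rels_le).
have sum0 : \sum_(r <- s) tarr l (tagged r) = 0.
  apply: oppr_inj; rewrite oppr0 -sumrN -[RHS]rels_l /relsum big_filter big_mkcond /=.
  apply: eq_big_seq => r rr; rewrite relcoordE ?(allP rels_le) //.
  have [sl|_] := eqVneq (src r) l.
    by rewrite l_top ?eqxx ?subrr // -sl (allP rels_le).
  by rewrite sub0r andbT; case: eqP; rewrite ?oppr0.
have [s' s'_lt s'_eq] := relsum_push_down inj_l s_l sum0.
exists s' => // n; rewrite /relsum big_cat big_filter.
have -> : \sum_(r <- s') relcoord n r = \sum_(r <- s) relcoord n r by exact: s'_eq.
rewrite [RHS](bigID (fun r => tgt r != l)) /=; congr (_ + _).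
rewrite big_filter [RHS](bigID (fun r => src r != l)) /= [X in _ = _ + X]big1 ?addr0.
  by apply: eq_bigl => r; rewrite negbK.
by move=> r /andP [/negPn/eqP tl /negPn/eqP sl]; apply: relcoord_loop; rewrite sl tl.
Qed.

Definition targets_above (m : P) (rels : seq (relT F)) : seq P :=
  [seq tgt r | r <- rels & m < tgt r].

Variable i : P.
Hypothesis dcc : DCC P.
Hypothesis colim_inj : forall j, j <= i -> colim_lt_inj F j.

Lemma relsum_lower_image (m : P) (rels : seq (relT F)) :
  all (fun r => (src r <= tgt r) && (tgt r <= i)) rels ->
  (forall n, m < n -> relsum rels n = 0) -> lower_image (relsum rels m).
Proof.
move eS: (targets_above m rels) => S.
elim: S / (replace_lt_wf dcc S) rels eS => S _ IH rels eS rels_ok rels_0.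
have rels_le : all (fun r => src r <= tgt r) rels.
  by apply: sub_all rels_ok => r /andP [].
have above r : r \in rels -> m < tgt r -> tgt r \in S.
  by move=> rr mr; rewrite -eS; apply: map_f; rewrite mem_filter mr.
have [S0|/seq_has_maximal [l lS l_max]] := eqVneq S [::].
  apply: lower_image_sum => r rr; apply: lower_image_relcoord; first exact: (allP rels_le).
  by apply/negP => /(above r rr); rewrite S0.
have [r0 r0r [tl ml]] : exists2 r0, r0 \in rels & tgt r0 = l /\ m < l.
  move: lS; rewrite -eS => /mapP [r0].
  by rewrite mem_filter => /andP [mr0 r0r] ->; exists r0.
have li : l <= i by rewrite -tl; case/andP: (allP rels_ok r0 r0r).
have l_top r : r \in rels -> l <= tgt r -> tgt r = l.
  move=> rr lt; have := l_max _ (above r rr (lt_le_trans ml lt)).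
  by rewrite lt_neqAle lt andbT negbK => /eqP.
have [s' s'_lt s'_eq] := relsum_reduce_top (colim_inj li) rels_le l_top (rels_0 l ml).
rewrite -s'_eq; apply: (IH _ _ _ erefl) => [|| n mn]; last by rewrite s'_eq rels_0.
- exists l => // t /mapP [r]; rewrite mem_filter mem_cat mem_filter.
  case/andP => mr /orP [/andP [rl rr]|rs'] ->; first by rewrite rl andbT above.
  by case/andP: (allP s'_lt r rs') => _ ->; rewrite orbT.
- rewrite all_cat all_filter; apply/andP; split.
    by apply: sub_all rels_ok => r rok; apply/implyP.
  by apply/allP => r /(allP s'_lt) /andP [-> /ltW /le_trans ->].
Qed.

End Relations.

Theorem lemma6p3 (R : comPzRingType) (d : Order.disp_t) (P : porderType d)
    (F : pfunctor R P) (i : P) :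
  DCC P ->
  (forall j : P, (j <= i)%O -> colim_lt_inj F j) ->
  forall j : P, (j <= i)%O -> pseudo_projective F j.
Proof.
move=> dcc colim_inj j ji J x J_uniq J_le sum0 k /andP [kJ k_max].
have [jJ|jJ] := boolP (j \in J).
  have -> : k = j.
    have := allP J_le k kJ; rewrite le_eqVlt => /predU1P [//|kj].
    by have := allP k_max j jJ; rewrite kj.
  exact: inImF_top J_uniq jJ J_le sum0.
have J_lt : all (fun l => l < j) J.
  apply/allP => l lJ; rewrite lt_neqAle (allP J_le l lJ) andbT.
  by apply: contraNneq jJ => <-.
have [rels [rels_lt rels_x]] := colim_inj j ji J x J_uniq J_lt sum0.
apply: inImF_lower_image; have := rels_x k; rewrite kJ => ->.
apply: (relsum_lower_image dcc colim_inj) => [|n kn].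
  by apply/allP => r /(allP rels_lt) /andP [-> /ltW /le_trans ->].
rewrite /relsum -rels_x; case: ifP => // nJ.
by have := allP k_max n nJ; rewrite kn.
Qed.
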